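(* Let $\mathcal G$ be a braided stability groupoid, $R$ a commutative ring, $V$ a $U\mathcal G$-module and $d\in\mathbb N$. If $\mathrm{coker}\,V$ is generated in ranks $\le d-1$, then $V$ is generated in ranks $\le d$.
   Context: Stability groupoid: monoidal groupoid $(\mathcal G,\oplus,0)$ with objects $(\mathbb N,+,0)$, $G_n=\mathrm{Aut}(n)$, $\oplus\colon G_m\times G_n\to G_{m+n}$ injective, $G_0$ trivial, $(G_{l+m}\times1)\cap(1\times G_{m+n})=1\times G_m\times1$ in $G_{l+m+n}$; braided: with braiding $b_{m,n}\in G_{m+n}$. $U\mathcal G$: objects $\mathbb N$, $\mathrm{Hom}(m,n)=G_n/G_{n-m}$ for $m\le n$ ($G_{n-m}\subset G_n$ via $g\mapsto g\oplus\mathrm{id}_m$), empty otherwise, composition $fG_l\circ gG_m=f(\mathrm{id}_l\oplus g)G_{l+m}$, monoidal via $f_1G_{m_1}\oplus f_2G_{m_2}=(f_1\oplus f_2)(\mathrm{id}_{m_1}\oplus b^{-1}_{n_1,m_2}\oplus\mathrm{id}_{n_2})G_{m_1+m_2}$; $0$ initial, $\iota_n\colon0\to n$. A $U\mathcal G$-module is a functor $V\colon U\mathcal G\to R\text{-Mod}$; it is generated in ranks $\le m$ if it is a quotient of $\bigoplus_jR\mathrm{Hom}(m_j,-)$ with all $m_j\le m$. $\mathrm{coker}\,V$ is the cokernel of the natural map $V\to V(1\oplus-)$ with components $V(\iota_1\oplus\mathrm{id}_n)$. *)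

From HB Require Import structures.
From mathcomp Require Import all_boot all_order all_algebra.
Set Implicit Arguments. Unset Strict Implicit. Unset Printing Implicit Defensive.
Import GRing.Theory.

(* Total transport along index equality: the identity transport when m = n,
   a junk value otherwise (only ever used at equal indices). *)
Definition tcast (G : nat -> Type) (one : forall n, G n) (m n : nat) (g : G m) : G n :=
  match @eqP _ m n with
  | ReflectT e => eq_rect m G g n e
  | ReflectF _ => one n
  end.
Arguments tcast {G} one m n g.

(* Group multiplication
   [mul f g] is composition "f after g". *)
Record BSG := {
  Gr :> nat -> Type;
  gmul : forall n, Gr n -> Gr n -> Gr n;
  gone : forall n, Gr n;
  ginv : forall n, Gr n -> Gr n;
  gmulA : forall n (x y z : Gr n), gmul x (gmul y z) = gmul (gmul x y) z;
  gmul1 : forall n (x : Gr n), gmul (gone n) x = x;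
  gmulV : forall n (x : Gr n), gmul (ginv x) x = gone n;
  oplus : forall m n, Gr m -> Gr n -> Gr (m + n);
  oplus_mul : forall m n (a a' : Gr m) (c c' : Gr n),
      oplus (gmul a a') (gmul c c') = gmul (oplus a c) (oplus a' c');
  oplus_one : forall m n, oplus (gone m) (gone n) = gone (m + n);
  oplus_assoc : forall l m n (a : Gr l) (c : Gr m) (e : Gr n),
      tcast gone (l + m + n) (l + (m + n)) (oplus (oplus a c) e)
      = oplus a (oplus c e);
  oplus_unitl : forall n (g : Gr n), tcast gone (0 + n) n (oplus (gone 0) g) = g;
  oplus_unitr : forall n (g : Gr n), tcast gone (n + 0) n (oplus g (gone 0)) = g;
  oplus_inj : forall m n (a a' : Gr m) (c c' : Gr n),
      oplus a c = oplus a' c' -> a = a' /\ c = c';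
  G0_trivial : forall g : Gr 0, g = gone 0;
  oplus_cap : forall l m n (w : Gr (l + (m + n))),
      ((exists x : Gr (l + m), w = tcast gone (l + m + n) (l + (m + n)) (oplus x (gone n)))
       /\ (exists y : Gr (m + n), w = oplus (gone l) y))
      <-> (exists z : Gr m, w = oplus (gone l) (oplus z (gone n)));
  braid : forall m n, Gr (m + n);
  braid_nat : forall m n (g : Gr m) (h : Gr n),
      gmul (braid m n) (oplus g h)
      = gmul (tcast gone (n + m) (m + n) (oplus h g)) (braid m n);
  braid_hex1 : forall l m n,
      braid l (m + n)
      = gmul (tcast gone (m + (l + n)) (l + (m + n)) (oplus (gone m) (braid l n)))
             (tcast gone (l + m + n) (l + (m + n)) (oplus (braid l m) (gone n)));
  braid_hex2 : forall l m n,
      braid (l + m) n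
      = gmul (tcast gone (l + n + m) (l + m + n) (oplus (braid l n) (gone m)))
             (tcast gone (l + (m + n)) (l + m + n) (oplus (gone l) (braid m n)))
}.

Arguments gone {b} n.
Arguments gmul {b n} _ _.
Arguments ginv {b n} _.
Arguments oplus {b m n} _ _.
Arguments braid {b} m n.

Section UG.
Local Unset Implicit Arguments.
Variable S : BSG.
Local Notation cast := (tcast (@gone S)).

(* Hom(m,n) (m <= n) is
   G_n / G_(n-m), G_(n-m) embedded via h |-> h + id_m; a morphism is given by
   a representative f in G_n, and [act m n f] must only depend on the coset.
   Composition: fG_l o gG_m = f (id_l + g) G_(l+m).  ([act m n] for m > n is
   meaningless junk and never used.) *)
Record UGmod (R : comPzRingType) := {
  Vm :> nat -> lmodType R;
  act : forall m n, S n -> Vm m -> Vm n;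
  act_linear : forall m n (f : S n), m <= n -> linear (act m n f);
  act_coset : forall m n (f : S n) (h : S (n - m)), m <= n ->
      act m n (gmul f (cast (n - m + m) n (oplus h (gone m)))) = act m n f;
  act_id : forall m (v : Vm m), act m m (gone m) v = v;
  act_comp : forall m n p (f : S p) (g : S n) (v : Vm m), m <= n -> n <= p ->
      act m p (gmul f (cast (p - n + n) p (oplus (gone (p - n)) g))) v
      = act n p f (act m n g v)
}.

Variable R : comPzRingType.

(* W (with morphism action actW) modulo the submodules K n is generated in
   ranks < e: there is a family of elements x_j in W(m_j), m_j < e, such that
   the induced map  (+)_j R Hom(m_j, -) -> W/K  is surjective, i.e. every
   w in W n is a finite R-combination of images of the x_j, up to K n. *)
Definition gen_lt (W : nat -> lmodType R) (actW : forall m n, S n -> W m -> W n)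
    (K : forall n, W n -> Prop) (e : nat) : Prop :=
  exists (J : Type) (mj : J -> nat) (x : forall j, W (mj j)),
    (forall j, mj j < e) /\
    forall n (w : W n),
      exists (s : seq {j : J & (S n * R)%type}) (k : W n),
        all (fun t => mj (tag t) <= n) s /\ K n k /\
        (w = \sum_(t <- s) (tagged t).2 *: actW (mj (tag t)) n (tagged t).1 (x (tag t)) + k)%R.

Variable V : UGmod R.

Definition generated_le (d : nat) : Prop :=
  gen_lt (Vm _ V) (act _ V) (fun n (v : Vm _ V n) => v = 0%R) d.+1.

(* The module V(1 + -): on f G_(b-a) : a -> b it acts by V(id_1 G_0 + f G_(b-a)),
   i.e. by (id_1 + f)(id_0 + b^-1_(1,b-a) + id_a) G_(b-a) : 1+a -> 1+b. *)
Definition Vshift (n : nat) : lmodType R := Vm _ V (1 + n).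
Definition shift_act (a b : nat) (f : S b) : Vshift a -> Vshift b :=
  act _ V (1 + a) (1 + b)
    (gmul (oplus (gone 1) f)
          (cast (0 + (1 + (b - a) + a)) (1 + b)
                (oplus (gone 0) (oplus (ginv (braid 1 (b - a))) (gone a))))).

(* Component V(iota_1 + id_n) : V n -> V (1 + n); iota_1 + id_n is
   (id_1 + id_n)(id_1 + b^-1_(0,0) + id_n) G_1. *)
Definition stab_map (n : nat) : Vm _ V n -> Vshift n :=
  act _ V n (1 + n)
    (gmul (oplus (gone 1) (gone n))
          (cast (1 + (0 + 0 + n)) (1 + n)
                (oplus (gone 1) (oplus (ginv (braid 0 0)) (gone n))))).

(* coker V = V(1+-) / im(V -> V(1+-)) generated in ranks <= d - 1
   (i.e. ranks < d; for d = 0 this means coker V = 0). *)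
Definition coker_generated_lt (d : nat) : Prop :=
  gen_lt Vshift shift_act (fun n (v : Vshift n) => exists w : Vm _ V n, v = stab_map n w) d.

End UG.
Arguments act {S R} _ _ _ _ _.
Arguments gen_lt {S R} W actW K e.
Arguments generated_le {S R} V d.
Arguments coker_generated_lt {S R} V d.

(** [V] is generated by [V 0] together with lifts of generators of [coker V]:
    a generator of [coker V] in rank [m < d] is an element of [V (1 + m)].
    By induction on the rank, an element of [V (1 + k)] is, modulo the image of
    the stabilisation map [V k -> V (1 + k)], a combination of such lifts, and
    that image is spanned by induction because the span of any family is
    stable under the action. *)

From HB Require Import structures.
From mathcomp Require Import all_boot all_algebra.
Set Implicit Arguments. Unset Strict Implicit. Unset Printing Implicit Defensive.
Import GRing.Theory.
Local Open Scope ring_scope.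

Section ActLinear.
Variables (S : BSG) (R : comPzRingType) (V : UGmod S R).

Definition act_linear_map m n (f : S n) (le_mn : (m <= n)%N) : {linear V m -> V n} :=
  HB.pack (act V m n f) (GRing.isLinear.Build _ _ _ _ _ (act_linear _ _ V m n f le_mn)).

Lemma actZ m n (f : S n) (r : R) (v : V m) :
  (m <= n)%N -> act V m n f (r *: v) = r *: act V m n f v.
Proof. by move=> le_mn; exact: (linearZ_LR (act_linear_map f le_mn)). Qed.

Lemma act_sum m n (f : S n) (I : Type) (s : seq I) (F : I -> V m) :
  (m <= n)%N -> act V m n f (\sum_(i <- s) F i) = \sum_(i <- s) act V m n f (F i).
Proof. by move=> le_mn; exact: (linear_sum (act_linear_map f le_mn)). Qed.

End ActLinear.

Section Span.
Variables (S : BSG) (R : comPzRingType) (V : UGmod S R).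
Variables (J : Type) (mj : J -> nat) (x : forall j, V (mj j)).

Definition spanned n (w : V n) : Prop :=
  exists s : seq {j : J & (S n * R)%type},
    all (fun t => mj (tag t) <= n)%N s /\
    w = \sum_(t <- s) (tagged t).2 *: act V (mj (tag t)) n (tagged t).1 (x (tag t)).

Lemma spanned0 n : spanned (0 : V n).
Proof. by exists [::]; rewrite big_nil. Qed.

Lemma spannedD n (v w : V n) : spanned v -> spanned w -> spanned (v + w).
Proof.
move=> [s [s_le ->]] [s' [s'_le ->]].
by exists (s ++ s'); rewrite all_cat s_le s'_le big_cat.
Qed.

Lemma spanned_sum n (I : Type) (P : pred I) (s : seq I) (F : I -> V n) :
  all P s -> (forall i, P i -> spanned (F i)) -> spanned (\sum_(i <- s) F i).
Proof.
move=> Ps spanF; elim: s Ps => [|i s IH]; first by rewrite big_nil => _; exact: spanned0.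
by rewrite big_cons => /andP[Pi Ps]; apply: spannedD; [exact: spanF | exact: IH].
Qed.

Lemma spanned_gen j n (f : S n) (r : R) :
  (mj j <= n)%N -> spanned (r *: act V (mj j) n f (x j)).
Proof.
by move=> le_jn; exists [:: existT _ j (f, r)]; rewrite /= le_jn big_seq1.
Qed.

Lemma spanned_act m n (g : S n) (w : V m) :
  (m <= n)%N -> spanned w -> spanned (act V m n g w).
Proof.
move=> le_mn [s [s_le ->]]; rewrite act_sum //.
apply: (spanned_sum s_le) => t le_tm.
rewrite actZ // -act_comp //.
exact: spanned_gen (leq_trans le_tm le_mn).
Qed.

Lemma generated_le_of_spanned d :
  (forall j, mj j <= d)%N -> (forall n (w : V n), spanned w) -> generated_le V d.
Proof.
move=> le_jd spanV; exists J, mj, x; split=> // n w.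
have [s [s_le ->]] := spanV n w.
by exists s, 0; rewrite addr0.
Qed.

End Span.

Theorem proposition7p5 (S : BSG) (R : comPzRingType) (V : UGmod S R) (d : nat) :
  coker_generated_lt V d -> generated_le V d.
Proof.
move=> [J [mj [x [lt_jd cokerV]]]].
pose mj' (j : V 0 + J) := (if j is inr j then 1 + mj j else 0)%N.
pose x' (j : V 0 + J) : V (mj' j) :=
  match j with inl v => v | inr j => x j end.
apply: (generated_le_of_spanned (x := x')) => [[//|j] | n w]; first exact: lt_jd.
elim: n w => [|k IH] w.
  by have := spanned_gen x' (j := inl w) (gone 0) 1 (leqnn 0); rewrite act_id scale1r.
have [s [_ [s_le [[w0 ->] ->]]]] := cokerV k w.
apply: spannedD; last by apply: spanned_act; [exact: leqnSn | exact: IH].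
apply: (spanned_sum s_le) => t le_tk.
exact: (spanned_gen x' (j := inr (tag t))).
Qed.
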